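(* Let $G$ be a finite GVZ-group with $|\mathrm{cd}(G)|=2$, and let $\{X_1,\dots,X_n\}=\{Z(\psi):\psi\in\mathrm{nl}(G)\}$ be the collection of centres of non-linear irreducible characters of $G$. Let $\chi\in\mathrm{nl}(G)$ and $1\le i\le n$. Then $Z(\chi)=X_i$ if and only if $[X_i,G]\subseteq\ker\chi$.
   Context: All groups are finite. $\mathrm{Irr}(G)$ is the set of complex irreducible characters of $G$, $\mathrm{nl}(G)$ the set of non-linear irreducible characters, and $\mathrm{cd}(G)=\{\chi(1):\chi\in\mathrm{Irr}(G)\}$. For a character $\chi$, $Z(\chi)=\{g\in G: |\chi(g)|=\chi(1)\}$. A nonabelian group $G$ is a GVZ-group if for every $\chi\in\mathrm{Irr}(G)$ we have $\chi(g)=0$ for all $g\in G\setminus Z(\chi)$. *)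

From HB Require Import structures.
From mathcomp Require Import all_boot all_order all_algebra all_fingroup all_solvable all_field all_character.
Set Implicit Arguments. Unset Strict Implicit. Unset Printing Implicit Defensive.
Import GroupScope GRing.Theory Num.Theory.
Local Open Scope ring_scope.

Definition cd (gT : finGroupType) (G : {group gT}) : seq algC :=
  undup [seq 'chi[G]_i 1%g | i : Iirr G].

Definition nonlinear_irr (gT : finGroupType) (G : {group gT}) (i : Iirr G) : bool :=
  'chi[G]_i 1%g != 1.

Definition GVZ (gT : finGroupType) (G : {group gT}) : Prop :=
  ~~ abelian G /\
  forall (i : Iirr G) (g : gT), g \in G -> g \notin ('Z('chi[G]_i))%CF -> 'chi[G]_i g = 0.

From mathcomp Require Import all_boot all_order all_algebra all_fingroup all_solvable all_field all_character.
Set Implicit Arguments. Unset Strict Implicit. Unset Printing Implicit Defensive.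
Import GroupScope GRing.Theory Num.Theory.
Local Open Scope ring_scope.

(* Since Z(chi)/ker chi = Z(G/ker chi), a subgroup X of G lies in Z(chi)
   exactly when [X, G] lies in ker chi.  An irreducible chi vanishing off
   Z(chi), where |chi| = chi(1), has norm 1 only if |G| = |Z(chi)| chi(1)^2.
   In a GVZ-group with |cd(G)| = 2 all non-linear characters share one degree,
   so all their centres have the same order, and the inclusion
   Z(psi) <= Z(chi) given by [Z(psi), G] <= ker chi is an equality. *)

Section IrrCenter.

Variables (gT : finGroupType) (G : {group gT}).

Lemma sub_cfcenter_irr_commg (i : Iirr G) (H : {set gT}) :
  H \subset G -> (H \subset 'Z('chi_i)%CF) = ([~: H, G] \subset cfker 'chi_i).
Proof.
move=> sHG; have nKH := subset_trans sHG (cfker_norm 'chi_i).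
have sKZ : cfker 'chi_i \subset 'Z('chi_i)%CF := normal_sub (cfker_center_normal _).
rewrite -(quotientSGK nKH sKZ) cfcenter_eq_center subsetI quotientS //=.
by rewrite quotient_cents2 ?cfker_norm.
Qed.

Lemma cardG_cfcenter_irr (i : Iirr G) :
  'chi_i \in 'CF(G, 'Z('chi_i)%CF) ->
  #|G|%:R = #|'Z('chi_i)%CF|%:R * 'chi_i 1%g ^+ 2 :> algC.
Proof.
move=> chi_on_Z; have := cfnormE chi_on_Z; rewrite cfnorm_irr.
have normZ x : x \in 'Z('chi_i)%CF -> `|'chi_i x| ^+ 2 = 'chi_i 1%g ^+ 2.
  move=> Zx; have Gx := subsetP (cfcenter_sub 'chi_i) x Zx.
  by move: Zx; rewrite irr_cfcenterE // => /eqP ->.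
have G_neq0 : #|G|%:R != 0 :> algC by rewrite pnatr_eq0 -lt0n cardG_gt0.
rewrite (eq_bigr _ normZ) sumr_const => /(congr1 ( *%R #|G|%:R)).
by rewrite mulr1 mulVKf // mulr_natl.
Qed.

Lemma GVZ_irr_on_cfcenter (i : Iirr G) :
  GVZ G -> 'chi_i \in 'CF(G, 'Z('chi_i)%CF).
Proof.
case=> _ chi_vanish; apply/cfun_onP => x notZx.
have [Gx | notGx] := boolP (x \in G); first exact: chi_vanish.
by rewrite cfun0.
Qed.

Lemma cd2_nonlinear_irr1 (chi psi : Iirr G) :
  size (cd G) = 2%N -> nonlinear_irr chi -> nonlinear_irr psi ->
  'chi_chi 1%g = 'chi_psi 1%g.
Proof.
rewrite /nonlinear_irr => cd2 chi1 psi1; apply/eqP/negPn/negP => chi1_psi1.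
have cd_deg j : 'chi[G]_j 1%g \in cd G.
  by rewrite mem_undup; apply/mapP; exists j; rewrite ?mem_enum.
have : (size [:: 1%R : algC; 'chi_chi 1%g; 'chi_psi 1%g] <= size (cd G))%N.
  apply: uniq_leq_size => [|x].
    by rewrite /= !inE negb_or chi1_psi1 !(eq_sym 1) chi1 psi1.
  rewrite !inE => /or3P[] /eqP ->; rewrite ?cd_deg //.
  by rewrite -(cfun11 G) -irr0 cd_deg.
by rewrite cd2.
Qed.

Lemma GVZ_cd2_card_cfcenter (chi psi : Iirr G) :
  GVZ G -> size (cd G) = 2%N -> nonlinear_irr chi -> nonlinear_irr psi ->
  #|'Z('chi_chi)%CF| = #|'Z('chi_psi)%CF|.
Proof.
move=> GVZ_G cd2 chi1 psi1; apply/eqP; rewrite -(eqr_nat algC); apply/eqP.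
have chi1_neq0 : 'chi_chi 1%g ^+ 2 != 0 by rewrite expf_neq0 ?irr1_neq0.
apply: (mulIf chi1_neq0); rewrite {2}(cd2_nonlinear_irr1 cd2 chi1 psi1).
rewrite -(cardG_cfcenter_irr (GVZ_irr_on_cfcenter chi GVZ_G)).
by rewrite -(cardG_cfcenter_irr (GVZ_irr_on_cfcenter psi GVZ_G)).
Qed.

End IrrCenter.

Theorem mainTheorem8 (gT : finGroupType) (G : {group gT})
  (HGVZ : GVZ G) (Hcd : size (cd G) = 2%N)
  (chi psi : Iirr G) (Hchi : nonlinear_irr chi) (Hpsi : nonlinear_irr psi) :
  ('Z('chi[G]_chi))%CF = ('Z('chi[G]_psi))%CF <->
  [~: ('Z('chi[G]_psi))%CF, G] \subset cfker 'chi[G]_chi.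
Proof.
rewrite -sub_cfcenter_irr_commg ?cfcenter_sub //; split=> [-> // | sZpsiZchi].
apply/esym/eqP; rewrite eqEcard sZpsiZchi /=.
by rewrite (GVZ_cd2_card_cfcenter HGVZ Hcd Hchi Hpsi).
Qed.
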